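(* Let $G$ be a $(P_2\cup P_4)$-free graph. Then $\chi(G)\le\frac{\omega(G)^3-\omega(G)^2+2\omega(G)}{2}$.
   Context: All graphs are finite, simple and undirected. $P_n$ is the path on $n$ vertices and $P_2\cup P_4$ is the disjoint union of $P_2$ and $P_4$. $G$ is $(P_2\cup P_4)$-free if it has no induced subgraph isomorphic to $P_2\cup P_4$. $\chi$ is the chromatic number and $\omega$ the clique number. *)

From mathcomp Require Import all_boot.
Set Implicit Arguments. Unset Strict Implicit. Unset Printing Implicit Defensive.

Definition simple_graph (T : finType) (e : rel T) : Prop :=
  symmetric e /\ irreflexive e.

Definition is_clique (T : finType) (e : rel T) (A : {set T}) : bool :=
  [forall x in A, forall y in A, (x != y) ==> e x y].

Definition clique_number (T : finType) (e : rel T) : nat :=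
  \max_(A : {set T} | is_clique e A) #|A|.

Definition proper_coloring (T : finType) (e : rel T) (k : nat) (c : T -> 'I_k) : Prop :=
  forall x y, e x y -> c x != c y.

Definition colorable (T : finType) (e : rel T) (k : nat) : Prop :=
  exists c : T -> 'I_k, proper_coloring e c.

Lemma colorable_card (T : finType) (e : rel T) :
  irreflexive e -> exists k, colorable e k.
Proof.
move=> irr; exists #|T|; exists (@enum_rank T) => x y exy.
apply/negP => /eqP /enum_rank_inj Exy; subst y; by rewrite irr in exy.
Qed.

(* chromatic number chi(G): least k with a proper k-colouring
   (for a non-irreflexive relation it is defaulted to 0; only used on simple graphs) *)
Definition chromatic_number (T : finType) (e : rel T) : nat :=
  match boolP [forall x, ~~ e x x] with
  | AltTrue h =>
      ex_minn (P := fun k => [exists c : {ffun T -> 'I_k},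
                               [forall x, forall y, e x y ==> (c x != c y)]])
        (let: ex_intro k (ex_intro c hc) :=
             colorable_card (fun x => negbTE (forallP h x)) in
         ex_intro _ k (introT existsP (ex_intro _ (finfun c)
            (introT forallP (fun x => introT forallP (fun y =>
               introT implyP (fun exy => eq_ind_r (fun a => a != _ )
                 (eq_ind_r (fun b => c x != b) (hc x y exy) (ffunE c y))
                 (ffunE c x))))))))
  | AltFalse _ => 0
  end.

(* the graph P2 ∪ P4 on vertex set 'I_6: edges 0-1 and the path 2-3-4-5 *)
Definition P2uP4_edge (i j : 'I_6) : bool :=
  let a := minn i j in let b := maxn i j in
  [|| (a == 0) && (b == 1), (a == 2) && (b == 3),
      (a == 3) && (b == 4) | (a == 4) && (b == 5)].

Definition induces (T : finType) (e : rel T) (n : nat) (h : rel 'I_n) : Prop :=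
  exists f : 'I_n -> T, injective f /\ forall i j, e (f i) (f j) = h i j.

Definition P2uP4_free (T : finType) (e : rel T) : Prop :=
  ~ induces e P2uP4_edge.

From mathcomp Require Import all_boot zify.
Set Implicit Arguments. Unset Strict Implicit. Unset Printing Implicit Defensive.

(* Fix a maximum clique K, of size w.  Every vertex misses (is non-adjacent to)
   a nonempty set of vertices of K.  Two adjacent vertices cannot miss the same
   single vertex v of K, or K - v would extend to a clique of size w + 1; so the
   vertices missing exactly one vertex of K are properly coloured by that vertex,
   with w colours.  Every other vertex misses two vertices u, v of K, which are
   adjacent.  The vertices missing both u and v induce a P4-free graph, since a
   P4 there together with uv would be an induced P2 + P4; P4-free graphs are
   perfect, so each of these C(w, 2) sets needs at most w colours.  Hence
   chi <= w + C(w, 2) w = (w^3 - w^2 + 2 w) / 2. *)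

Section Colorings.
Variables (T : finType) (e : rel T).

Definition colorable_on (U : {set T}) (k : nat) :=
  exists c : T -> nat, {in U, forall x, c x < k} /\
    {in U &, forall x y, e x y -> c x != c y}.

Lemma colorable_onS (U V : {set T}) k :
  U \subset V -> colorable_on V k -> colorable_on U k.
Proof.
move=> /subsetP sUV [c [c_lt c_ok]]; exists c; split=> [x /sUV | x y /sUV xV /sUV yV].
  exact: c_lt.
exact: c_ok.
Qed.

Lemma colorable_onU (A B : {set T}) kA kB :
  colorable_on A kA -> colorable_on B kB -> colorable_on (A :|: B) (kA + kB).
Proof.
move=> [cA [cA_lt cA_ok]] [cB [cB_lt cB_ok]].
exists (fun x => if x \in A then cA x else kA + cB x); split.
  move=> x; rewrite inE; case: ifP => [xA _ | _ /= xB].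
    by have := cA_lt _ xA; lia.
  by have := cB_lt _ xB; lia.
move=> x y; rewrite !inE => xAB yAB exy.
case: ifP => xA; case: ifP => yA.
- exact: cA_ok.
- by have := cA_lt _ xA; lia.
- by have := cA_lt _ yA; lia.
- rewrite xA in xAB; rewrite yA in yAB.
  by have := cB_ok _ _ xAB yAB exy; lia.
Qed.

Lemma colorable_on_bigcup (I : finType) (A : {pred I}) (F : I -> {set T}) k :
  {in A, forall i, colorable_on (F i) k} ->
  colorable_on (\bigcup_(i in A) F i) (#|A| * k).
Proof.
move=> FA; rewrite -big_enum cardE.
have : {in enum A, forall i, colorable_on (F i) k}.
  by move=> i; rewrite mem_enum; apply: FA.
elim: (enum A) => [_ | i s IHs Fs].
  by rewrite big_nil; exists (fun=> 0); split=> x; rewrite inE.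
rewrite big_cons mulSn; apply: colorable_onU.
  by apply: Fs; rewrite mem_head.
by apply: IHs => j js; apply: Fs; rewrite in_cons js orbT.
Qed.

Lemma colorable_on_image (U K : {set T}) (f : T -> T) :
  {in U, forall x, f x \in K} -> {in U &, forall x y, e x y -> f x != f y} ->
  colorable_on U #|K|.
Proof.
move=> fK f_ok; exists (fun x => index (f x) (enum K)); split.
  by move=> x xU; rewrite cardE index_mem mem_enum fK.
move=> x y xU yU /(f_ok _ _ xU yU); apply: contra => /eqP fxy.
by apply/eqP; move: fxy; apply: (index_inj x); rewrite mem_enum fK.
Qed.

Lemma chromatic_number_leq k : colorable_on setT k -> chromatic_number e <= k.
Proof.
move=> [c [c_lt c_ok]]; rewrite /chromatic_number.
destruct (boolP [forall x, ~~ e x x]) => //; case: ex_minnP => m _; apply.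
apply/existsP; exists [ffun x => Ordinal (c_lt x (in_setT x))].
apply/forallP => x; apply/forallP => y; apply/implyP => exy.
by rewrite !ffunE; apply: c_ok; rewrite ?in_setT.
Qed.

End Colorings.

Section Cographs.
Variables (T : finType) (e : rel T).
Hypotheses (esym : symmetric e) (eirr : irreflexive e).

Definition independent (A : {set T}) := [forall x in A, forall y in A, ~~ e x y].

Definition clique_in (U : {set T}) : pred {set T} :=
  fun A => (A \subset U) && is_clique e A.

Definition independent_in (U : {set T}) : pred {set T} :=
  fun A => (A \subset U) && independent A.

Definition P4_free_on (U : {set T}) :=
  forall a b c d, a \in U -> b \in U -> c \in U -> d \in U ->
  [&& e a b, e b c & e c d] -> [&& ~~ e a c, ~~ e b d & ~~ e a d] -> False.

Lemma cliqueP (A : {set T}) :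
  reflect {in A &, forall x y, x != y -> e x y} (is_clique e A).
Proof.
apply: (iffP forall_inP) => [cA x y xA yA | cA x xA].
  by move/forall_inP/(_ y yA): (cA x xA) => /implyP.
by apply/forall_inP => y yA; apply/implyP; apply: cA.
Qed.

Lemma independentP (A : {set T}) :
  reflect {in A &, forall x y, ~~ e x y} (independent A).
Proof.
apply: (iffP forall_inP) => [iA x y xA yA | iA x xA].
  exact: forall_inP (iA x xA) y yA.
by apply/forall_inP => y yA; apply: iA.
Qed.

Lemma clique_subset (A B : {set T}) : A \subset B -> is_clique e B -> is_clique e A.
Proof.
by move=> /subsetP sAB /cliqueP cB; apply/cliqueP => x y /sAB xB /sAB yB; apply: cB.
Qed.

Lemma cliqueU1 x (A : {set T}) :
  is_clique e A -> {in A, forall y, e x y} -> is_clique e (x |: A).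
Proof.
move=> /cliqueP cA xA; apply/cliqueP => a b; rewrite !inE.
case/orP => [/eqP-> | aA]; case/orP => [/eqP-> | bA].
- by rewrite eqxx.
- by move=> _; apply: xA.
- by move=> _; rewrite esym; apply: xA.
- exact: cA.
Qed.

Lemma independentU1 x (A : {set T}) :
  independent A -> {in A, forall y, ~~ e x y} -> independent (x |: A).
Proof.
move=> /independentP iA xA; apply/independentP => a b; rewrite !inE.
case/orP => [/eqP-> | aA]; case/orP => [/eqP-> | bA].
- by rewrite eirr.
- exact: xA.
- by rewrite esym; apply: xA.
- exact: iA.
Qed.

Lemma P4_free_onS (U V : {set T}) : U \subset V -> P4_free_on V -> P4_free_on U.
Proof. by move=> /subsetP sUV freeV a b c d /sUV ? /sUV ? /sUV ? /sUV ?; apply: freeV. Qed.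

Lemma maxset_clique_in_nonadj U K x :
  maxset (clique_in U) K -> x \in U -> x \notin K -> exists2 y, y \in K & ~~ e x y.
Proof.
move=> /maxsetP [/andP [KU cK] maxK] xU xK.
have [/exists_inP // | /exists_inPn adj] := boolP [exists y in K, ~~ e x y].
have xKU : clique_in U (x |: K).
  by rewrite /clique_in subUset sub1set xU KU cliqueU1 // => y /adj /negPn.
by move/setP/(_ x): (maxK _ xKU (subsetUr _ _)); rewrite !inE eqxx (negbTE xK).
Qed.

Lemma maxset_independent_in_adj U S x :
  maxset (independent_in U) S -> x \in U -> x \notin S -> exists2 y, y \in S & e x y.
Proof.
move=> /maxsetP [/andP [SU iS] maxS] xU xS.
have [/exists_inP // | /exists_inPn nadj] := boolP [exists y in S, e x y].
have xSU : independent_in U (x |: S).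
  by rewrite /independent_in subUset sub1set xU SU independentU1.
by move/setP/(_ x): (maxS _ xSU (subsetUr _ _)); rewrite !inE eqxx (negbTE xS).
Qed.

(* Seesaw argument: a vertex [k0] of K with fewest neighbours in S has a
   neighbour [s] in S, [s] has a non-neighbour [k'] in K, and [k'] must have a
   neighbour [s'] in S that [k0] misses; then s' k' k0 s is an induced P4. *)
Lemma P4_free_maxset_meet U K S :
  P4_free_on U -> maxset (clique_in U) K -> maxset (independent_in U) S ->
  K != set0 -> K :&: S != set0.
Proof.
move=> freeU maxK maxS /set0Pn [k1 k1K].
have /andP [/subsetP KU /cliqueP cK] := maxsetp maxK.
have /andP [/subsetP SU /independentP iS] := maxsetp maxS.
apply/negP => /eqP KS0.
have notS k : k \in K -> k \notin S.
  by move=> kK; apply/negP => kS; move/setP/(_ k): KS0; rewrite !inE kK kS.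
pose N k := [set s in S | e k s].
case: (arg_minnP (fun k => #|N k|) k1K) => k0 k0K minN.
have [s sS ek0s] := maxset_independent_in_adj maxS (KU _ k0K) (notS _ k0K).
have sK : s \notin K by apply: contraL sS; apply: notS.
have [k' k'K nesk'] := maxset_clique_in_nonadj maxK (SU _ sS) sK.
have /subsetPn [s' /setIdP [s'S ek's'] nk0s'] : ~~ (N k' \subset N k0).
  apply/negP => sub; have : N k' \proper N k0.
    apply/properP; split=> //; exists s; first by rewrite inE sS.
    by rewrite inE sS esym (negbTE nesk').
  by move/proper_card; rewrite ltnNge minN.
rewrite inE s'S /= in nk0s'.
have k'k0 : k' != k0 by apply: contraNneq nesk' => ->; rewrite esym.
apply: (freeU s' k' k0 s (SU _ s'S) (KU _ k'K) (KU _ k0K) (SU _ sS)).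
  by rewrite esym ek's' cK.
by rewrite esym nk0s' esym nesk' iS.
Qed.

(* Every P4-free graph is perfect: a maximal independent set meets every
   maximal clique, so removing it lowers the clique number. *)
Lemma P4_free_colorable_on k U :
  P4_free_on U -> (forall C, clique_in U C -> #|C| <= k) -> colorable_on e U k.
Proof.
elim: k U => [|k IHk] U freeU boundU.
  suff -> : U = set0 by exists (fun=> 0); split=> x; rewrite inE.
  apply/setP => x; rewrite inE; apply/negbTE/negP => xU.
  suff /boundU : clique_in U [set x] by rewrite cards1.
  by rewrite /clique_in sub1set xU; apply/cliqueP => a b /set1P-> /set1P->; rewrite eqxx.
have [S maxS] : {S | maxset (independent_in U) S}.
  apply: ex_maxset; exists set0.
  by rewrite /independent_in sub0set; apply/independentP => x; rewrite inE.
have /andP [SU /independentP iS] := maxsetp maxS.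
apply: (colorable_onS (V := S :|: U :\: S)).
  by apply/subsetP => x xU; rewrite !inE xU andbT orbN.
rewrite -add1n; apply: colorable_onU.
  by exists (fun=> 0); split=> // x y xS yS exy; have := iS x y xS yS; rewrite exy.
apply: IHk => [|C /andP [CUS cC]]; first exact: P4_free_onS (subsetDl _ _) freeU.
have CU : C \subset U := subset_trans CUS (subsetDl _ _).
have [-> | CN0] := eqVneq C set0; first by rewrite cards0.
have [K maxK CK] := maxset_exists (P := clique_in U) (C := C) (introT andP (conj CU cC)).
have KN0 : K != set0 by apply: contraNneq CN0 => K0; rewrite -subset0 -K0.
have /set0Pn [s /setIP [sK sS]] := P4_free_maxset_meet freeU maxK maxS KN0.
have : C \proper K.
  rewrite properE CK; apply/subsetPn; exists s => //.
  by apply: contraL sS => /(subsetP CUS); rewrite inE => /andP [].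
by move/proper_card; have := boundU _ (maxsetp maxK); lia.
Qed.

End Cographs.

Lemma P2uP4_edge_twin_free (i j : 'I_6) : P2uP4_edge i =1 P2uP4_edge j -> i = j.
Proof.
move=> eij; apply: val_inj; move: eij.
case: i j => [[|[|[|[|[|[|i]]]]]] ?] // [[|[|[|[|[|[|j]]]]]] ?] // eij.
all: first [by [] | by move: (eij (@Ordinal 6 0 isT)) | by move: (eij (@Ordinal 6 1 isT))
  | by move: (eij (@Ordinal 6 2 isT)) | by move: (eij (@Ordinal 6 3 isT))
  | by move: (eij (@Ordinal 6 5 isT))].
Qed.

Section P2uP4Free.
Variables (T : finType) (e : rel T).
Hypotheses (esym : symmetric e) (eirr : irreflexive e).

Lemma induces_P2uP4 u v a b c d :
  e u v -> [&& ~~ e u a, ~~ e u b, ~~ e u c & ~~ e u d] ->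
  [&& ~~ e v a, ~~ e v b, ~~ e v c & ~~ e v d] ->
  [&& e a b, e b c & e c d] -> [&& ~~ e a c, ~~ e b d & ~~ e a d] ->
  induces e P2uP4_edge.
Proof.
move=> euv /and4P [/negbTE eua /negbTE eub /negbTE euc /negbTE eud].
move=> /and4P [/negbTE eva /negbTE evb /negbTE evc /negbTE evd] /and3P [eab ebc ecd].
move=> /and3P [/negbTE eac /negbTE ebd /negbTE ead].
pose f (i : 'I_6) := nth u [:: u; v; a; b; c; d] i.
have ef i j : e (f i) (f j) = P2uP4_edge i j.
  by case: i j => [[|[|[|[|[|[|i]]]]]] ?] // [[|[|[|[|[|[|j]]]]]] ?] //=;
    rewrite ?eirr // esym.
(* f is injective because distinct vertices of P2 + P4 have distinct neighbourhoods. *)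
exists f; split=> [i j fij | //]; apply: P2uP4_edge_twin_free => k.
by rewrite -!ef fij.
Qed.

Definition anticomplete (P : {set T}) := [set x | [forall y in P, ~~ e x y]].

Lemma P4_free_on_anticomplete_edge u v :
  P2uP4_free e -> e u v -> P4_free_on e (anticomplete [set u; v]).
Proof.
move=> free euv; have anti x : x \in anticomplete [set u; v] -> ~~ e u x && ~~ e v x.
  by rewrite inE => /forall_inP Px; rewrite ![e _ x]esym !Px ?set21 ?set22.
move=> a b c d /anti/andP [eua eva] /anti/andP [eub evb] /anti/andP [euc evc].
move=> /anti/andP [eud evd] P4 nP4; apply: free.
by apply: (induces_P2uP4 euv) P4 nP4; apply/and4P.
Qed.

End P2uP4Free.

Section MaximumClique.
Variables (T : finType) (e : rel T) (K : {set T}).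
Hypotheses (esym : symmetric e) (eirr : irreflexive e) (free : P2uP4_free e).
Hypotheses (cK : is_clique e K) (maxK : forall A, is_clique e A -> #|A| <= #|K|).

Definition nonneighbours x := [set y in K | ~~ e x y].

Lemma nonneighbours_clique x : x \in K -> nonneighbours x = [set x].
Proof.
move=> xK; apply/setP => y; rewrite !inE.
have [-> | yx] := eqVneq y x; first by rewrite xK eirr.
have /cliqueP adjK := cK.
by case yK: (y \in K); rewrite /= ?adjK // eq_sym.
Qed.

Lemma nonneighbours_neq0 x : nonneighbours x != set0.
Proof.
have [xK | xK] := boolP (x \in K).
  by rewrite nonneighbours_clique // -card_gt0 cards1.
have maxsetK : maxset (clique_in e setT) K.
  apply/maxsetP; split=> [|A /andP [_ cA] KA]; first by rewrite /clique_in subsetT.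
  by apply/eqP; rewrite eq_sym eqEcard KA maxK.
have [y yK nexy] := maxset_clique_in_nonadj esym maxsetK (in_setT x) xK.
by apply/set0Pn; exists y; rewrite inE yK.
Qed.

(* Two adjacent vertices missing the same single vertex [v] of K would extend
   K minus [v] to a larger clique. *)
Lemma same_unique_nonneighbour_nonadj x y v :
  nonneighbours x = [set v] -> nonneighbours y = [set v] -> ~~ e x y.
Proof.
move=> Nx Ny; apply/negP => exy.
have vN z : nonneighbours z = [set v] -> v \in K /\ ~~ e z v.
  by move=> Nz; move: (set11 v); rewrite -Nz inE => /andP.
have [vK nexv] := vN x Nx; have [_ neyv] := vN y Ny.
have adj z w : nonneighbours z = [set v] -> w \in K :\ v -> e z w.
  move=> Nz /setD1P [wv wK]; apply/negPn; apply: contra wv => nezw.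
  by apply/eqP/set1P; rewrite -Nz inE wK.
have notK z w : nonneighbours z = [set v] -> e w z -> ~~ e w v -> z \notin K.
  move=> Nz ewz; apply: contraL => zK.
  by move: Nz; rewrite nonneighbours_clique // => /set1_inj <-; rewrite ewz.
have xK : x \notin K by apply: (notK _ y Nx); rewrite // esym.
have yK : y \notin K by apply: (notK _ x Ny).
have xy : x != y by apply: contraTneq exy => ->; rewrite eirr.
have cxyK : is_clique e (x |: (y |: K :\ v)).
  apply: (cliqueU1 esym); last by move=> z /setU1P [-> // | /(adj _ _ Nx)].
  apply: (cliqueU1 esym) => [|z /(adj _ _ Ny)] //.
  exact: clique_subset (subsetDl _ _) cK.
have := maxK cxyK; rewrite !cardsU1 !inE negb_or xy (negbTE xK) (negbTE yK) !andbF.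
by rewrite /= [#|K|](cardsD1 v) vK; lia.
Qed.

Lemma colorable_on_unique_nonneighbour :
  colorable_on e [set x | #|nonneighbours x| == 1] #|K|.
Proof.
pose f x := odflt x [pick y in nonneighbours x].
have Nf x : #|nonneighbours x| == 1 -> nonneighbours x = [set f x].
  move=> /cards1P [y Ny]; rewrite /f Ny.
  by case: pickP => [z /set1P -> // | /(_ y)]; rewrite set11.
apply: (colorable_on_image (f := f)) => [x | x y].
  by rewrite inE => /Nf Nx; move: (set11 (f x)); rewrite -Nx inE => /andP [].
rewrite !inE => /Nf Nx /Nf Ny; apply: contraL => /eqP fxy.
by apply: (same_unique_nonneighbour_nonadj Nx); rewrite Ny fxy.
Qed.

Lemma colorable_on_anticomplete_pair (P : {set T}) :
  P \subset K -> #|P| == 2 -> colorable_on e (anticomplete e P) #|K|.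
Proof.
move=> PK /cards2P [u [v [uv PE]]]; rewrite PE in PK *.
apply: (P4_free_colorable_on esym eirr) => [|C /andP [_ /maxK] //].
apply: (P4_free_on_anticomplete_edge esym eirr free).
have /cliqueP adjK := cK.
by apply: adjK uv; apply: (subsetP PK); rewrite !inE eqxx ?orbT.
Qed.

Lemma nonneighbours_cover :
  [set: T] \subset [set x | #|nonneighbours x| == 1] :|:
    \bigcup_(P in [set P : {set T} | P \subset K & #|P| == 2]) anticomplete e P.
Proof.
apply/subsetP => x _; rewrite in_setU inE; case: eqP => [// | N1] /=.
have : 1 < #|nonneighbours x|.
  by have := nonneighbours_neq0 x; rewrite -card_gt0; lia.
case/card_gt1P => a [b [aN bN ab]].
move: aN bN; rewrite !inE => /andP [aK nexa] /andP [bK nexb].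
apply/bigcupP; exists [set a; b].
  by rewrite inE cards2 ab andbT; apply/subsetP => y /set2P [] ->.
by rewrite inE; apply/forall_inP => y /set2P [] ->.
Qed.

Lemma colorable_on_setT : colorable_on e setT (#|K| + 'C(#|K|, 2) * #|K|).
Proof.
apply: colorable_onS nonneighbours_cover _.
apply: colorable_onU; first exact: colorable_on_unique_nonneighbour.
rewrite -cards_draws; apply: colorable_on_bigcup => P; rewrite inE => /andP [].
exact: colorable_on_anticomplete_pair.
Qed.

End MaximumClique.

Lemma double_color_count w : 2 * (w + 'C(w, 2) * w) = w ^ 3 - w ^ 2 + 2 * w.
Proof. have := mul_bin_diag w 1; rewrite bin1; nia. Qed.

Theorem corollary4p3 (T : finType) (e : rel T) :
  simple_graph e -> P2uP4_free e ->
  2 * chromatic_number e <=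
    clique_number e ^ 3 - clique_number e ^ 2 + 2 * clique_number e.
Proof.
move=> [esym eirr] free.
have set0_clique : is_clique e set0 by apply/cliqueP => x y; rewrite inE.
rewrite /clique_number (bigmax_eq_arg set0) //; case: arg_maxnP => // K cK maxK.
rewrite -double_color_count leq_mul2l /=.
exact/chromatic_number_leq/(colorable_on_setT esym eirr free cK maxK).
Qed.
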